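(* Let $m\ge1$ and, for $\mathfrak{g}\in\{\mathfrak{h}_s,\mathfrak{r}_s,\mathfrak{d}_s\}$, $\mathcal{G}(q)=\max\{\mathfrak{g}(\tau):\tau\in T,\ \rho(\tau)\le q\}$. Then for $q\in\{\frac12,1,\frac32,2,\dots\}$: $\mathcal{G}(q)=\lfloor q+\frac12\rfloor$ for $\mathfrak{g}=\mathfrak{h}_s$ (simple iterations of semi-implicit methods); $\mathcal{G}(q)=\lfloor\frac23(q+1)\rfloor$ for $\mathfrak{g}=\mathfrak{r}_s$ (modified Newton iterations); $\mathcal{G}(q)=\lfloor\log_2\frac{q+1}{3}\rfloor+2$ for $\mathfrak{g}=\mathfrak{d}_s$ (full Newton iterations).
   Context: $T$: the empty tree $\emptyset$ and all $\tau=[\tau_1,\dots,\tau_\kappa]_l$ with $l\in\{0,\dots,m\}$, $\kappa\ge0$, $\tau_j\in T\setminus\{\emptyset\}$ unordered (new root of color $l$ joined to roots of the $\tau_j$; $\bullet_l$ if $\kappa=0$). Order: $\rho(\emptyset)=0$, $\rho([\tau_1,\dots,\tau_\kappa]_l)=\sum_j\rho(\tau_j)+1$ if $l=0$, $+\frac12$ if $l\ge1$. Maxima over empty sets are $0$. $\mathfrak{h}_s(\emptyset)=0$, $\mathfrak{h}_s([\tau_1,\dots,\tau_\kappa]_l)=1$ if $l>0$, $=1+\max_j\mathfrak{h}_s(\tau_j)$ if $l=0$. $\mathfrak{r}_s(\emptyset)=0$, $\mathfrak{r}_s(\bullet_l)=1$; for $\tau=[\tau_1,\dots,\tau_\kappa]_l$: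 $1$ if $l>0$; $\mathfrak{r}_s(\tau_1)$ if $l=0,\kappa=1$; $1+\max_j\mathfrak{r}_s(\tau_j)$ if $l=0,\kappa\ge2$. $\mathfrak{d}_s(\emptyset)=0$, $\mathfrak{d}_s(\bullet_l)=1$; for $\tau=[\tau_1,\dots,\tau_\kappa]_l$: $1$ if $l>0$; with $M=\max_j\mathfrak{d}_s(\tau_j)$, $M$ if $l=0$ and exactly one $i$ has $\mathfrak{d}_s(\tau_i)=M$, and $M+1$ if $l=0$ and at least two indices attain $M$. (These are the growth functions of simple, modified Newton and full Newton iterations for semi-implicit stochastic Taylor methods, i.e. those with $\Phi_{im}(\tau)\equiv0$ unless the root of $\tau$ has color $0$.) *)

From Stdlib Require Import Reals List Arith Bool.
Import ListNotations.
Open Scope R_scope.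

(* A nonempty colored tree: [Node l [t1;...;tk]] is [t1,...,tk]_l.
   Children are stored as a list; all functions below are symmetric in
   the children, so this represents unordered trees faithfully. *)
Inductive tree : Type := Node : nat -> list tree -> tree.

(* Elements of T: None is the empty tree, Some t a nonempty tree. *)
Definition T := option tree.

Fixpoint colors_ok (m : nat) (t : tree) : bool :=
  match t with Node l ts => Nat.leb l m && forallb (colors_ok m) ts end.
Definition colors_okT (m : nat) (t : T) : bool :=
  match t with None => true | Some t => colors_ok m t end.

Fixpoint rho (t : tree) : R :=
  match t with
  | Node l ts =>
      fold_right Rplus 0 (map rho ts) + (if Nat.eqb l 0 then 1 else / 2)
  end.
Definition rhoT (t : T) : R := match t with None => 0 | Some t => rho t end.

Definition maxl (vs : list nat) : nat := fold_right Nat.max 0%nat vs.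

Fixpoint hs (t : tree) : nat :=
  match t with
  | Node l ts => if Nat.eqb l 0 then S (maxl (map hs ts)) else 1%nat
  end.

Fixpoint rs (t : tree) : nat :=
  match t with
  | Node l ts =>
      if Nat.eqb l 0 then
        match map rs ts with
        | [] => 1%nat
        | [v] => v
        | vs => S (maxl vs)
        end
      else 1%nat
  end.

Fixpoint ds (t : tree) : nat :=
  match t with
  | Node l ts =>
      if Nat.eqb l 0 then
        match map ds ts with
        | [] => 1%nat
        | vs =>
            let M := maxl vs in
            if Nat.leb 2 (count_occ Nat.eq_dec vs M) then S M else M
        end
      else 1%nat
  end.

Definition liftT (g : tree -> nat) (t : T) : nat :=
  match t with None => 0%nat | Some t => g t end.

Definition is_G (m : nat) (g : tree -> nat) (q : R) (N : nat) : Prop :=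
  (forall t : T, colors_okT m t = true -> rhoT t <= q -> (liftT g t <= N)%nat) /\
  (exists t : T, colors_okT m t = true /\ rhoT t <= q /\ liftT g t = N).

(* Count the order in half units: [weight t = 2 rho(t)], so a colour-0 node weighs
   2 and any other node 1.  Structural induction bounds each growth function by
   the weight: [2 hs <= weight + 1], [3 rs <= weight + 2] (a branching colour-0
   node needs a second child) and [3 2^ds <= 2 (weight + 2)] (raising [ds] needs
   two children attaining the maximum).  Chains, combs and perfect binary trees of
   colour-0 nodes over leaves of colour 1 attain these bounds, and the three
   maxima are then floors of quotients, resp. of a binary logarithm. *)

From Stdlib Require Import Reals List Lia Lra Arith.
Import ListNotations.
Open Scope R_scope.

Fixpoint tree_nested_ind (P : tree -> Prop)
  (H : forall l ts, Forall P ts -> P (Node l ts)) (t : tree) : P t :=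
  match t with
  | Node l ts => H l ts ((fix F (ts : list tree) : Forall P ts :=
       match ts with
       | [] => Forall_nil _
       | t :: r => Forall_cons _ (tree_nested_ind P H t) (F r)
       end) ts)
  end.

Definition sumn (l : list nat) : nat := fold_right Nat.add 0%nat l.

Fixpoint weight (t : tree) : nat :=
  match t with
  | Node l ts => ((if Nat.eqb l 0 then 2 else 1) + sumn (map weight ts))%nat
  end.

Lemma weight_pos t : (1 <= weight t)%nat.
Proof. destruct t as [l ts]; simpl; destruct (Nat.eqb l 0); lia. Qed.

Lemma length_le_sum_weight ts : (length ts <= sumn (map weight ts))%nat.
Proof. induction ts as [|t ts IH]; simpl; [lia|]. pose proof (weight_pos t); lia. Qed.

Lemma rho_weight t : rho t = INR (weight t) / 2.
Proof.
  induction t as [l ts IH] using tree_nested_ind; simpl.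
  assert (Hsum : fold_right Rplus 0 (map rho ts) = INR (sumn (map weight ts)) / 2).
  { induction IH as [|t r Ht _ IHr]; simpl; [lra|].
    rewrite plus_INR, Ht, IHr; lra. }
  rewrite Hsum, plus_INR; destruct (Nat.eqb l 0); simpl; lra.
Qed.

Lemma hs_weight t : (2 * hs t <= weight t + 1)%nat.
Proof.
  induction t as [l ts IH] using tree_nested_ind; simpl.
  destruct (Nat.eqb l 0); [|lia].
  enough (2 * maxl (map hs ts) <= sumn (map weight ts) + 1)%nat by lia.
  induction IH as [|t r Ht _ IHr]; unfold maxl in *; simpl; lia.
Qed.

Lemma rs_weight t : (3 * rs t <= weight t + 2)%nat.
Proof.
  induction t as [l ts IH] using tree_nested_ind.
  assert (Hmax : (3 * maxl (map rs ts) + length ts <= sumn (map weight ts) + 3)%nat).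
  { induction IH as [|t r Ht _ IHr]; unfold maxl in *; simpl; [lia|].
    pose proof (length_le_sum_weight r); pose proof (weight_pos t); lia. }
  simpl; destruct (Nat.eqb l 0); [|lia].
  destruct ts as [|t1 [|t2 r]]; simpl in *; [lia| |].
  - inversion IH; subst; lia.
  - unfold maxl in *; simpl in *; lia.
Qed.

Definition ds_weight_bound (t : tree) : Prop := (3 * 2 ^ ds t <= 2 * (weight t + 2))%nat.

Lemma ds_maxl_weight ts : Forall ds_weight_bound ts ->
  (3 * 2 ^ maxl (map ds ts) <= 2 * (sumn (map weight ts) + 2))%nat.
Proof.
  induction 1 as [|t r Ht _ IHr]; unfold ds_weight_bound, maxl in *; simpl; [lia|].
  destruct (Nat.max_spec (ds t) (fold_right Nat.max 0%nat (map ds r)))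
    as [[_ ->]|[_ ->]]; lia.
Qed.

Lemma ds_In_weight ts a : Forall ds_weight_bound ts -> In a (map ds ts) ->
  (3 * 2 ^ a <= 2 * (sumn (map weight ts) + 2))%nat.
Proof.
  induction 1 as [|t r Ht _ IHr]; unfold ds_weight_bound in *; simpl; [tauto|].
  intros [<-|Ha]; [lia|]. specialize (IHr Ha); lia.
Qed.

Lemma ds_twice_weight ts a : Forall ds_weight_bound ts ->
  (2 <= count_occ Nat.eq_dec (map ds ts) a)%nat ->
  (6 * 2 ^ a <= 2 * sumn (map weight ts) + 8)%nat.
Proof.
  induction 1 as [|t r Ht Hr IHr]; unfold ds_weight_bound in *; simpl; [lia|].
  destruct (Nat.eq_dec (ds t) a) as [<-|]; intros Hcount.
  - assert (Hin : In (ds t) (map ds r)) by (apply (count_occ_In Nat.eq_dec); lia).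
    pose proof (ds_In_weight _ _ Hr Hin); lia.
  - specialize (IHr Hcount); lia.
Qed.

Lemma ds_weight t : ds_weight_bound t.
Proof.
  induction t as [l ts IH] using tree_nested_ind; unfold ds_weight_bound; cbn [ds weight].
  destruct (Nat.eqb l 0); [|simpl; lia].
  destruct ts as [|t1 r]; [simpl; lia|].
  cbn [map]; destruct (Nat.leb 2 _) eqn:Hcount.
  - apply Nat.leb_le in Hcount.
    pose proof (ds_twice_weight _ _ IH Hcount); cbn [map] in *.
    rewrite Nat.pow_succ_r'; lia.
  - pose proof (ds_maxl_weight _ IH); cbn [map] in *; lia.
Qed.

Definition bullet1 : tree := Node 1 [].

Fixpoint chain (n : nat) : tree :=
  match n with O => bullet1 | S n => Node 0 [chain n] end.
Fixpoint comb (n : nat) : tree :=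
  match n with O => bullet1 | S n => Node 0 [comb n; bullet1] end.
Fixpoint perfect (n : nat) : tree :=
  match n with O => bullet1 | S n => Node 0 [perfect n; perfect n] end.

Lemma chain_colors m n : (1 <= m)%nat -> colors_ok m (chain n) = true.
Proof. destruct m; [lia|]; intros; induction n; simpl; rewrite ?IHn; auto. Qed.
Lemma comb_colors m n : (1 <= m)%nat -> colors_ok m (comb n) = true.
Proof. destruct m; [lia|]; intros; induction n; simpl; rewrite ?IHn; auto. Qed.
Lemma perfect_colors m n : (1 <= m)%nat -> colors_ok m (perfect n) = true.
Proof. destruct m; [lia|]; intros; induction n; simpl; rewrite ?IHn; auto. Qed.

Lemma chain_spec n : hs (chain n) = S n /\ weight (chain n) = (2 * n + 1)%nat.
Proof.
  induction n as [|n [Hh Hw]]; simpl; auto.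
  rewrite Hh, Hw; unfold maxl; simpl; split; lia.
Qed.

Lemma comb_spec n : rs (comb n) = S n /\ weight (comb n) = (3 * n + 1)%nat.
Proof.
  induction n as [|n [Hr Hw]]; simpl; auto.
  rewrite Hr, Hw; unfold maxl; simpl; split; lia.
Qed.

Lemma perfect_spec n : ds (perfect n) = S n /\ (weight (perfect n) + 2 = 3 * 2 ^ n)%nat.
Proof.
  induction n as [|n [Hd Hw]]; simpl; auto; split.
  - rewrite Hd; unfold maxl; simpl; rewrite Nat.max_id.
    destruct (Nat.eq_dec n n); [reflexivity|congruence].
  - unfold sumn; simpl; lia.
Qed.

Lemma is_G_weight m (g : tree -> nat) k N t0 :
  (forall t, (weight t <= k)%nat -> (g t <= N)%nat) ->
  colors_ok m t0 = true -> (weight t0 <= k)%nat -> g t0 = N ->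
  is_G m g (INR k / 2) N.
Proof.
  intros Hbound Hcol Hw Hg; split.
  - intros [t|] _ Hrho; simpl in *; [|lia].
    apply Hbound, INR_le; rewrite rho_weight in Hrho; lra.
  - exists (Some t0); simpl; repeat split; auto.
    rewrite rho_weight; apply Rmult_le_compat_r; [lra|]; apply le_INR; exact Hw.
Qed.

Lemma is_G_hs m k : (1 <= m)%nat -> (1 <= k)%nat -> is_G m hs (INR k / 2) ((k + 1) / 2).
Proof.
  intros Hm Hk; set (N := ((k + 1) / 2)%nat).
  assert (HN : (2 * N <= k + 1 < 2 * N + 2 /\ 1 <= N)%nat).
  { pose proof (Nat.div_mod (k + 1) 2); pose proof (Nat.mod_upper_bound (k + 1) 2); lia. }
  destruct (chain_spec (N - 1)) as [Hh Hw].
  apply (is_G_weight m hs k N (chain (N - 1))); [|apply chain_colors; auto|lia|lia].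
  intros t Ht; pose proof (hs_weight t); lia.
Qed.

Lemma is_G_rs m k : (1 <= m)%nat -> (1 <= k)%nat -> is_G m rs (INR k / 2) ((k + 2) / 3).
Proof.
  intros Hm Hk; set (N := ((k + 2) / 3)%nat).
  assert (HN : (3 * N <= k + 2 < 3 * N + 3 /\ 1 <= N)%nat).
  { pose proof (Nat.div_mod (k + 2) 3); pose proof (Nat.mod_upper_bound (k + 2) 3); lia. }
  destruct (comb_spec (N - 1)) as [Hr Hw].
  apply (is_G_weight m rs k N (comb (N - 1))); [|apply comb_colors; auto|lia|lia].
  intros t Ht; pose proof (rs_weight t); lia.
Qed.

Lemma is_G_ds m k : (1 <= m)%nat -> (1 <= k)%nat ->
  is_G m ds (INR k / 2) (S (Nat.log2 ((k + 2) / 3))).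
Proof.
  intros Hm Hk; set (a := ((k + 2) / 3)%nat); set (n := Nat.log2 a).
  assert (Ha : (3 * a <= k + 2 < 3 * a + 3 /\ 0 < a)%nat).
  { pose proof (Nat.div_mod (k + 2) 3); pose proof (Nat.mod_upper_bound (k + 2) 3).
    unfold a; lia. }
  assert (Hn : (2 ^ n <= a < 2 ^ S n)%nat) by (apply Nat.log2_spec; lia).
  rewrite Nat.pow_succ_r' in Hn.
  destruct (perfect_spec n) as [Hd Hw].
  apply (is_G_weight m ds k (S n) (perfect n)); [|apply perfect_colors; auto|lia|lia].
  intros t Ht; pose proof (ds_weight t) as Hds; unfold ds_weight_bound in Hds.
  enough (Hlt : (2 ^ ds t < 2 ^ S (S n))%nat)
    by (apply Nat.pow_lt_mono_r_iff in Hlt; lia).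
  rewrite !Nat.pow_succ_r'; lia.
Qed.

Lemma Int_part_spec (r : R) (z : Z) : IZR z <= r < IZR z + 1 -> Int_part r = z.
Proof.
  intros [Hlo Hhi]; unfold Int_part.
  rewrite <- (tech_up r (z + 1)); rewrite ?plus_IZR; try lra; ring.
Qed.

Lemma Rdiv_bounds (lo hi x y : R) : 0 < y -> lo * y <= x < hi * y -> lo <= x / y < hi.
Proof.
  intros Hy [Hlo Hhi].
  split; [apply (Rmult_le_reg_r y) | apply (Rmult_lt_reg_r y)]; try lra;
    unfold Rdiv; rewrite Rmult_assoc, Rinv_l; lra.
Qed.

Lemma Int_part_div (a b : nat) : (0 < b)%nat ->
  Int_part (INR a / INR b) = Z.of_nat (a / b).
Proof.
  intros Hb; apply Int_part_spec; rewrite <- INR_IZR_INZ.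
  pose proof (Nat.div_mod a b) as Hdm; pose proof (Nat.mod_upper_bound a b) as Hmod.
  apply Rdiv_bounds; [apply lt_0_INR; exact Hb|]; split.
  - rewrite <- mult_INR; apply le_INR; lia.
  - rewrite <- S_INR, <- mult_INR; apply lt_INR; lia.
Qed.

Lemma ln_div_ln2_bounds (x : R) (n : nat) : 2 ^ n <= x < 2 ^ S n ->
  INR n <= ln x / ln 2 < INR n + 1.
Proof.
  intros [Hlo Hhi].
  assert (Hpow : 0 < 2 ^ n) by (apply pow_lt; lra).
  apply Rdiv_bounds; [rewrite <- ln_1; apply ln_increasing; lra|]; split.
  - rewrite <- ln_pow by lra.
    destruct (Rle_lt_or_eq_dec _ _ Hlo) as [Hlt | <-]; [left; apply ln_increasing|]; lra.
  - rewrite <- S_INR, <- ln_pow by lra; apply ln_increasing; lra.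
Qed.

Lemma Int_part_log2_div (a b : nat) : (0 < b <= a)%nat ->
  Int_part (ln (INR a / INR b) / ln 2) = Z.of_nat (Nat.log2 (a / b)).
Proof.
  intros Hab; set (n := Nat.log2 (a / b)).
  assert (Hn : (2 ^ n <= a / b < 2 ^ S n)%nat)
    by (apply Nat.log2_spec, Nat.div_str_pos; lia).
  pose proof (Nat.div_mod a b) as Hdm; pose proof (Nat.mod_upper_bound a b) as Hmod.
  apply Int_part_spec; rewrite <- INR_IZR_INZ; apply ln_div_ln2_bounds.
  replace 2 with (INR 2) by reflexivity; rewrite <- !pow_INR.
  apply Rdiv_bounds; [apply lt_0_INR; lia|]; split.
  - rewrite <- mult_INR; apply le_INR; nia.
  - rewrite <- mult_INR; apply lt_INR; nia.
Qed.

Lemma Int_part_log2_half (x : R) : 0 < x ->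
  Int_part (ln (x / 2) / ln 2) = (Int_part (ln x / ln 2) - 1)%Z.
Proof.
  intros Hx; assert (Hln2 : 0 < ln 2) by (rewrite <- ln_1; apply ln_increasing; lra).
  assert (Hln : ln (x / 2) / ln 2 = ln x / ln 2 - 1).
  { replace (x / 2) with (x * / 2) by reflexivity.
    rewrite ln_mult, ln_Rinv by (try apply Rinv_0_lt_compat; lra); field; lra. }
  apply Int_part_spec; rewrite Hln, minus_IZR.
  pose proof (base_Int_part (ln x / ln 2)); lra.
Qed.

Theorem mainTheorem10 (m : nat) (hm : (1 <= m)%nat) (k : nat) (hk : (1 <= k)%nat) :
  let q := INR k / 2 in
  (exists N, is_G m hs q N /\ INR N = IZR (Int_part (q + / 2))) /\
  (exists N, is_G m rs q N /\ INR N = IZR (Int_part (2 / 3 * (q + 1)))) /\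
  (exists N, is_G m ds q N /\
             INR N = IZR (Int_part (ln ((q + 1) / 3) / ln 2)) + 2).
Proof.
  intros q; split; [|split].
  - exists ((k + 1) / 2)%nat; split; [apply is_G_hs; auto|].
    replace (q + / 2) with (INR (k + 1) / INR 2) by (unfold q; rewrite plus_INR; simpl; field).
    rewrite Int_part_div by lia; apply INR_IZR_INZ.
  - exists ((k + 2) / 3)%nat; split; [apply is_G_rs; auto|].
    replace (2 / 3 * (q + 1)) with (INR (k + 2) / INR 3)
      by (unfold q; rewrite plus_INR; simpl; field).
    rewrite Int_part_div by lia; apply INR_IZR_INZ.
  - exists (S (Nat.log2 ((k + 2) / 3))); split; [apply is_G_ds; auto|].
    replace ((q + 1) / 3) with (INR (k + 2) / INR 3 / 2)
      by (unfold q; rewrite plus_INR; simpl; field).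
    rewrite Int_part_log2_half, Int_part_log2_div by
      (try apply Rdiv_lt_0_compat; try apply lt_0_INR; lia).
    rewrite minus_IZR, <- INR_IZR_INZ, S_INR; simpl; lra.
Qed.
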